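(* There exists a sequence $\gamma(2),\gamma(3),\dots$ of nonnegative reals with $\gamma(k)\to 0$ exponentially as $k\to\infty$ (i.e. $\gamma(k)\le Cq^k$ for some constants $C>0$, $0<q<1$), such that for every $k\ge 2$ and every $k$-uniform cross intersecting matching $\mathcal A_1,\dots,\mathcal A_t$ of type $(d_1,\dots,d_t)$, $$\sum_{i=1}^t d_i(d_i-1)\le (1+\gamma(k))\binom{2k}{k}.$$
   Context: For integers $t,k\ge 2$, a family of hypergraphs $\mathcal A_1,\dots,\mathcal A_t$ is a $k$-uniform cross intersecting matching of size $t$ and type $(d_1,\dots,d_t)$ if each $d_i\ge 2$, each $\mathcal A_i$ consists of $d_i$ pairwise disjoint $k$-element sets, and $X\cap Y\neq\emptyset$ whenever $X\in\mathcal A_i$, $Y\in\mathcal A_j$, $1\le i\ne j\le t$. *)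

From HB Require Import structures.
From mathcomp Require Import all_boot all_order all_algebra.
From mathcomp Require Export reals.
Set Implicit Arguments. Unset Strict Implicit. Unset Printing Implicit Defensive.

(* Its type is (#|A_0|, ..., #|A_{t-1}|). *)
Definition cross_intersecting_matching (T : finType) (k t : nat)
    (A : 'I_t -> {set {set T}}) : Prop :=
  [/\ (2 <= t)%N, (2 <= k)%N, forall i, (2 <= #|A i|)%N
    & [/\ forall i X, X \in A i -> #|X| = k,
           forall i X Y, X \in A i -> Y \in A i -> X != Y -> [disjoint X & Y]
         & forall i j X Y, i != j -> X \in A i -> Y \in A j ->
             ~~ [disjoint X & Y]]].

From HB Require Import structures.
From mathcomp Require Import all_boot all_order all_algebra all_fingroup.
From mathcomp Require Import reals.
From mathcomp Require Import zify ring lra.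
Set Implicit Arguments. Unset Strict Implicit. Unset Printing Implicit Defensive.

(* Read a permutation s of the ground set as an ordering of it, x sitting at
   position enum_rank (s x), and consider for an ordered pair (X, Y) of distinct
   edges of one family the orderings putting all of X before all of Y.  These
   are a fraction 1 / C(2k, k) of all orderings; two such events of one family
   occur together in at most a fraction 2 / C(3k, k), because then a k-set
   precedes a disjoint 2k-set; and events of different families never occur
   together, because X_i meets Y_j and X_j meets Y_i.  Hence an ordering lies
   in at most k^2 events, and summing N_s <= 1 + N_s (N_s - 1) over orderings,
   N_s being the number of events containing s, bounds the number N of ordered
   pairs by N / C(2k, k) <= 1 + 2 k^2 N / C(3k, k), with N <= k^2 C(2k, k).
   Finally C(2k, k) / C(3k, k) <= (2/3)^k. *)

Lemma sum_nat_indicator (I : finType) (D : {pred I}) (P : pred I) :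
  \sum_(i in D) (P i : nat) = #|[set i in D | P i]|.
Proof.
rewrite [LHS]big_mkcond -sum1dep_card [RHS]big_mkcond.
by apply: eq_bigr => i _; case: (i \in D); case: (P i).
Qed.

Lemma card_le_distinct_pairs (I : finType) (D : {pred I}) (P : pred I) :
  #|[set i in D | P i]| <=
    1 + \sum_(i in D) \sum_(j in D) ((i != j) && P i && P j).
Proof.
have [->|[i0 Si0]] := set_0Vmem [set i in D | P i]; first by rewrite cards0.
move: (Si0); rewrite inE => /andP[Di0 Pi0].
rewrite (cardsD1 i0) Si0 (bigD1 i0) //= leq_add2l (leq_trans _ (leq_addr _ _)) //.
rewrite sum_nat_indicator subset_leq_card //; apply/subsetP => j.
by rewrite !inE Pi0 eq_sym andbT => /andP[-> /andP[-> ->]].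
Qed.

Lemma nat_ivt (f : nat -> nat) n a :
  f 0 = 0 -> (forall c, f c.+1 <= (f c).+1) -> a <= f n -> exists c, f c = a.
Proof.
move=> f0 fS; elim: n => [|n IHn]; first by rewrite f0 leqn0 => /eqP->; exists 0.
case: (leqP a (f n)) => [/IHn //|lt_fn_a le_a_fSn].
by exists n.+1; apply/eqP; rewrite eqn_leq le_a_fSn (leq_trans (fS n)).
Qed.

Section Precedence.
Variable T : finType.
Implicit Types (s p : {perm T}) (X Y Z W : {set T}).

Definition prank s (x : T) : nat := enum_rank (s x).

Definition precedes s X Y : bool :=
  [forall x in X, forall y in Y, prank s x < prank s y].

Lemma prank_inj s : injective (prank s).
Proof. by move=> x y /val_inj/enum_rank_inj/perm_inj. Qed.

Lemma precedesP s X Y :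
  reflect {in X & Y, forall x y, prank s x < prank s y} (precedes s X Y).
Proof.
apply: (iffP forall_inP) => [H x y Xx Yy | H x Xx].
  exact: (forall_inP (H x Xx)).
by apply/forall_inP => y Yy; apply: H.
Qed.

Lemma precedes_disjoint s X Y : precedes s X Y -> [disjoint X & Y].
Proof.
move/precedesP=> H; rewrite -setI_eq0; apply/set0Pn => -[x /setIP[Xx Yx]].
by have := H x x Xx Yx; rewrite ltnn.
Qed.

Lemma precedesUl s X X' Y :
  precedes s X Y -> precedes s X' Y -> precedes s (X :|: X') Y.
Proof.
move=> /precedesP H /precedesP H'; apply/precedesP => x y /setUP[] Xx Yy.
  exact: H. exact: H'.
Qed.

Lemma precedesUr s X Y Y' :
  precedes s X Y -> precedes s X Y' -> precedes s X (Y :|: Y').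
Proof.
move=> /precedesP H /precedesP H'; apply/precedesP => x y Xx /setUP[] Yy.
  exact: H. exact: H'.
Qed.

Lemma precedes_cross s X Y X' Y' :
  precedes s X Y -> precedes s X' Y' -> precedes s X Y' || precedes s X' Y.
Proof.
move=> /precedesP H /precedesP H'.
have [//|] := boolP (precedes s X Y').
case/forall_inPn => x Xx /forall_inPn[y' Y'y']; rewrite -leqNgt => le_y'x /=.
apply/precedesP => x' y X'x' Yy.
by have := H x y Xx Yy; have := H' x' y' X'x' Y'y'; lia.
Qed.

Lemma precedes_mull p s X Y : precedes (p * s) X Y = precedes s (p @: X) (p @: Y).
Proof.
have prankM x : prank (p * s) x = prank s (p x) by rewrite /prank permM.
apply/precedesP/precedesP => [H _ _ /imsetP[x Xx ->] /imsetP[y Yy ->] | H x y Xx Yy].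
  by rewrite -!prankM; apply: H.
by rewrite !prankM; apply: H; apply: imset_f.
Qed.

Lemma card_precedes_imset p X Y :
  #|[set s | precedes s (p @: X) (p @: Y)]| = #|[set s | precedes s X Y]|.
Proof.
rewrite -[RHS](card_preimset _ (mulgI p)).
by apply: eq_card => s; rewrite !inE precedes_mull.
Qed.

Lemma perm_on_imset X Y :
  #|X| = #|Y| -> exists2 p : {perm T}, perm_on (X :|: Y) p & p @: X = Y.
Proof.
have [n] := ubnP #|X :\: Y|; elim: n X => // n IHn X ltXYn eqXY.
have [/eqP|[a]] := set_0Vmem (X :\: Y).
  rewrite setD_eq0 => sXY; exists 1%g; first exact: perm_on1.
  by rewrite imset_perm1; apply/eqP; rewrite eqEcard sXY eqXY /=.
rewrite inE => /andP[Ya' Xa].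
have [b]: exists b, b \in Y :\: X.
  apply/set0Pn; rewrite -cards_eq0 cardsD setIC -eqXY -cardsD.
  by rewrite cards_eq0; apply/set0Pn; exists a; rewrite inE Ya' Xa.
rewrite inE => /andP[Xb' Yb].
pose tau := tperm a b; pose X' := tau @: X.
have X'E x : (x \in X') = (tau x \in X).
  by rewrite /X' /tau -{1}tpermV im_permV inE.
have [||p' onp' p'X'] := IHn X'.
- rewrite -ltnS (leq_trans _ ltXYn) // (cardsD1 a (X :\: Y)) inE Ya' Xa add1n ltnS.
  apply: subset_leq_card; apply/subsetP => x; rewrite !inE X'E.
  by case: tpermP => [->|->|/eqP-> _]; rewrite ?eqxx ?(negPf Xb') ?Yb ?andbF.
- by rewrite /X' card_imset //; apply: perm_inj.
exists (tau * p')%g.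
  apply: perm_onM.
    apply: subset_trans (tperm_on a b) _; apply/subsetP => x.
    by rewrite !inE => /orP[]/eqP->; rewrite ?Xa ?Yb ?orbT.
  apply: subset_trans onp' _; apply/subsetP => x; rewrite !inE X'E.
  by case: tpermP => [->|->|_ _ ->]; rewrite ?Xa ?Yb ?orbT.
by rewrite -p'X' -imset_comp; apply: eq_imset => x; rewrite permM.
Qed.

Lemma initial_segment_exists s Z a :
  a <= #|Z| ->
  exists2 W : {set T}, W \subset Z & (#|W| == a) && precedes s W (Z :\: W).
Proof.
move=> leaZ; pose seg c := [set z in Z | prank s z < c].
have [c segc]: exists c, #|seg c| = a.
  apply: (@nat_ivt (fun c => #|seg c|) #|T|) => [|c|].
  - by apply/eqP; rewrite cards_eq0; apply/eqP/setP => z; rewrite !inE ltn0 andbF.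
  - have sub: seg c.+1 \subset seg c :|: [set z | prank s z == c].
      apply/subsetP => z; rewrite !inE ltnS leq_eqVlt.
      by case/andP=> -> /orP[]->; rewrite ?orbT.
    apply: leq_trans (subset_leq_card sub) _; rewrite -addn1.
    apply: leq_trans (leq_card_setU _ _) _; rewrite leq_add2l.
    apply/card_le1_eqP => x y; rewrite !inE => /eqP <- /eqP.
    exact: prank_inj.
  - suff ->: seg #|T| = Z by [].
    by apply/setP => z; rewrite inE ltn_ord andbT.
exists (seg c); first by apply/subsetP => z; rewrite inE => /andP[].
rewrite segc eqxx; apply/precedesP => x y; rewrite !inE => /andP[_ ltxc].
case/andP; rewrite negb_and -leqNgt => /orP[/negPf-> // | le_cy _].
exact: leq_trans ltxc le_cy.
Qed.

Lemma initial_segment_uniq s Z W1 W2 :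
  W1 \subset Z -> W2 \subset Z -> #|W1| = #|W2| ->
  precedes s W1 (Z :\: W1) -> precedes s W2 (Z :\: W2) -> W1 = W2.
Proof.
move=> sW1Z sW2Z eqW12 /precedesP prec1 /precedesP prec2; apply/eqP.
rewrite eqEcard eqW12 leqnn andbT; apply/subsetP => w1 W1w1; apply: contraT => W2w1.
have [w2 W2w2 W1w2]: exists2 w2, w2 \in W2 & w2 \notin W1.
  apply/subsetPn; apply: contra W2w1 => sW21.
  by have/eqP-> : W2 == W1 by rewrite eqEcard sW21 eqW12 /=.
have := prec1 w1 w2 W1w1; have := prec2 w2 w1 W2w2.
by rewrite !inE W1w2 W2w1 (subsetP sW1Z) ?(subsetP sW2Z) // => /(_ isT) + /(_ isT); lia.
Qed.

(* Each ordering has exactly one initial segment of size #|X| in X :|: Y, and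
   permutations of X :|: Y show that all C(#|X| + #|Y|, #|X|) candidate segments
   occur equally often. *)
Lemma card_precedes X Y : [disjoint X & Y] ->
  #|[set s | precedes s X Y]| * 'C(#|X| + #|Y|, #|X|) = #|{perm T}|.
Proof.
move=> dXY; set Z := X :|: Y.
have cardZ : #|Z| = #|X| + #|Y| by rewrite cardsU disjoint_setI0 // cards0 subn0.
pose Ws := [set W : {set T} | W \subset Z & #|W| == #|X|].
have card_segments W : W \in Ws ->
    #|[set s | precedes s W (Z :\: W)]| = #|[set s | precedes s X Y]|.
  rewrite inE => /andP[sWZ /eqP cardW].
  have [p onp pX] := perm_on_imset (esym cardW).
  have pZ : p @: Z = Z.
    by apply/im_perm_on/(subset_trans onp); rewrite subUset subsetUl.
  have pY : p @: Y = Z :\: W.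
    have -> : Y = Z :\: X.
      by rewrite setDUl setDv set0U; apply/esym/setDidPl; rewrite disjoint_sym.
    by rewrite -[p]invgK !im_permV preimsetD -!im_permV invgK pZ pX.
  by rewrite -pY -pX card_precedes_imset.
have unique_segment s : \sum_(W in Ws) precedes s W (Z :\: W) = 1.
  rewrite sum_nat_indicator.
  have leXZ : #|X| <= #|Z| by rewrite cardZ leq_addr.
  have [W0 sW0Z /andP[/eqP cardW0 precW0]] := initial_segment_exists s leXZ.
  apply/eqP/cards1P; exists W0; apply/setP => W; rewrite !inE.
  apply/idP/eqP => [/andP[/andP[sWZ /eqP cardW] precW] | ->].
    by apply: (initial_segment_uniq sWZ sW0Z _ precW precW0); rewrite cardW cardW0.
  by rewrite sW0Z cardW0 eqxx.
rewrite -cardZ -cards_draws -/Ws mulnC -sum_nat_const.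
transitivity (\sum_(W in Ws) \sum_s (precedes s W (Z :\: W) : nat)).
  apply: eq_bigr => W WsW; rewrite -(card_segments W WsW).
  exact/esym/(sum_nat_indicator predT).
rewrite exchange_big -sum1_card /=; apply: eq_bigr => s _; exact: unique_segment.
Qed.

Lemma card_precedes_le X Y :
  #|[set s | precedes s X Y]| * 'C(#|X| + #|Y|, #|X|) <= #|{perm T}|.
Proof.
have [dXY|ndXY] := boolP [disjoint X & Y]; first by rewrite card_precedes.
suff -> : [set s | precedes s X Y] = set0 by rewrite cards0.
by apply/setP => s; rewrite !inE; apply: contraNF ndXY; apply: precedes_disjoint.
Qed.

End Precedence.

Section CrossIntersectingMatching.
Variables (T : finType) (k t : nat) (A : 'I_t -> {set {set T}}).
Implicit Types (s : {perm T}) (p q : 'I_t * ({set T} * {set T})).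

Definition edge_pairs : {set 'I_t * ({set T} * {set T})} :=
  [set p | [&& p.2.1 \in A p.1, p.2.2 \in A p.1 & p.2.1 != p.2.2]].

Definition pair_precedes s p := precedes s p.2.1 p.2.2.

Definition preceding_pairs s := [set p in edge_pairs | pair_precedes s p].

Lemma card_edge_pairs_at i :
  #|[set p in edge_pairs | p.1 == i]| = #|A i| * (#|A i| - 1).
Proof.
pose diag := [set (X, X) | X in A i].
have -> : [set p in edge_pairs | p.1 == i] = pair i @: (setX (A i) (A i) :\: diag).
  apply/setP => -[j [X Y]]; rewrite !inE /=; apply/idP/imsetP.
    case/andP=> /and3P[AX AY neXY] /eqP eq_ji; subst j; exists (X, Y) => //.
    rewrite !inE AX AY andbT /= andbT.
    by apply: contra neXY => /imsetP[Z _ [-> ->]].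
  case=> -[X' Y'] /setDP[/setXP[AX' AY'] ndiag] [-> -> ->].
  rewrite AX' AY' eqxx andbT /=; apply: contra ndiag => /eqP <-.
  exact: imset_f.
rewrite card_imset; last by move=> ? ? [].
rewrite cardsD (setIidPr _) ?cardsX ?card_imset ?mulnBr ?muln1 //.
  by move=> ? ? [].
by apply/subsetP => _ /imsetP[X AX ->]; rewrite inE AX.
Qed.

Lemma card_edge_pairs : #|edge_pairs| = \sum_(i < t) #|A i| * (#|A i| - 1).
Proof.
rewrite -sum1_card (partition_big fst xpredT) //=.
by apply: eq_bigr => i _; rewrite sum1dep_card card_edge_pairs_at.
Qed.

Hypothesis matchingA : cross_intersecting_matching k A.

Lemma edge_card i X : X \in A i -> #|X| = k.
Proof. by case: matchingA => _ _ _ [card_edges _ _]; apply: card_edges. Qed.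

Lemma edges_disjoint i X Y : X \in A i -> Y \in A i -> X != Y -> [disjoint X & Y].
Proof. by case: matchingA => _ _ _ [_ disj _]; apply: disj. Qed.

Lemma edges_meet i j X Y : i != j -> X \in A i -> Y \in A j -> ~~ [disjoint X & Y].
Proof. by case: matchingA => _ _ _ [_ _ meet]; apply: meet. Qed.

(* An edge Y of another family meets each edge of A i, at pairwise distinct points. *)
Lemma card_family_le i : #|A i| <= k.
Proof.
have [le2t _ le2A _] := matchingA.
have [j]: exists j, j \in [set~ i].
  by apply/set0Pn; rewrite -cards_eq0 cardsC1 card_ord -lt0n -subn1 subn_gt0.
rewrite !inE eq_sym => neq_ij.
have [Y AY]: exists Y, Y \in A j by apply/set0Pn; rewrite -cards_eq0 -lt0n ltnW.
pose meet X := [pick y in X :&: Y].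
have meetP X : X \in A i -> exists2 y, meet X = Some y & y \in X :&: Y.
  move=> AX; rewrite /meet; case: pickP => [y XYy|no_y]; first by exists y.
  have /set0Pn[y XYy] : X :&: Y != set0 by rewrite setI_eq0 (edges_meet neq_ij).
  by have := no_y y; rewrite XYy.
rewrite -(edge_card AY) -(card_in_imset (f := meet)) => [|X1 X2 AX1 AX2].
  rewrite -(card_imset Y (@Some_inj _)); apply/subset_leq_card/subsetP.
  by move=> _ /imsetP[X AX ->]; have [y -> /setIP[_ Yy]] := meetP X AX; apply: imset_f.
have [y1 -> /setIP[X1y1 _]] := meetP X1 AX1.
have [y2 -> /setIP[X2y2 _]] := meetP X2 AX2.
case=> eq_y12; apply/eqP; apply: contraT => neX12.
by rewrite -eq_y12 (disjointFr (edges_disjoint AX1 AX2 neX12) X1y1) in X2y2.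
Qed.

Lemma card_edge_pairs_at_le i : #|[set p in edge_pairs | p.1 == i]| <= k * k.
Proof.
by rewrite card_edge_pairs_at leq_mul ?(leq_trans (leq_subr 1 _)) ?card_family_le.
Qed.

Lemma pair_precedes_same_family s p q : p \in edge_pairs -> q \in edge_pairs ->
  pair_precedes s p -> pair_precedes s q -> p.1 = q.1.
Proof.
case: p q => [i [X Y]] [j [X' Y']]; rewrite !inE /pair_precedes /=.
move=> /and3P[AX AY _] /and3P[AX' AY' _] /precedesP precXY /precedesP precXY'.
apply/eqP; apply: contraT => neq_ij.
have /set0Pn[x /setIP[Xx Y'x]]: X :&: Y' != set0 by rewrite setI_eq0 (edges_meet neq_ij).
have /set0Pn[y /setIP[X'y Yy]]: X' :&: Y != set0.
  by rewrite setI_eq0 (edges_meet _ AX' AY) // eq_sym.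
by have := precXY x y Xx Yy; have := precXY' y x X'y Y'x; lia.
Qed.

Lemma card_preceding_pairs_le s : #|preceding_pairs s| <= k * k.
Proof.
have [->|[p0]] := set_0Vmem (preceding_pairs s); first by rewrite cards0.
move=> /setIdP[Ep0 prec0].
apply: leq_trans (card_edge_pairs_at_le p0.1); apply/subset_leq_card/subsetP => p.
move=> /setIdP[Ep prec]; apply/setIdP; split => //.
exact/eqP/(pair_precedes_same_family Ep Ep0 prec prec0).
Qed.

Lemma card_pair_precedes p : p \in edge_pairs ->
  #|[set s | pair_precedes s p]| * 'C(2 * k, k) = #|{perm T}|.
Proof.
case: p => i [X Y]; rewrite inE /= => /and3P[AX AY neXY].
have := card_precedes (edges_disjoint AX AY neXY).
by rewrite (edge_card AX) (edge_card AY) addnn -mul2n.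
Qed.

(* With p = (i, (X, Y)) and q = (i, (X', Y')): if Y = Y' then X :|: X' precedes Y,
   otherwise X or X' precedes Y :|: Y'. *)
Lemma card_pair_precedes_both_le p q :
  p \in edge_pairs -> q \in edge_pairs -> p != q ->
  #|[set s | pair_precedes s p && pair_precedes s q]| * 'C(3 * k, k)
    <= 2 * #|{perm T}| * (p.1 == q.1).
Proof.
move=> Ep Eq neqpq; have [same_family|] := eqVneq p.1 q.1; last first.
  move=> diff_family; suff -> : [set s | pair_precedes s p && pair_precedes s q] = set0.
    by rewrite cards0.
  apply/setP => s; rewrite !inE; apply/negP => /andP[precp precq].
  by move: diff_family; rewrite (pair_precedes_same_family Ep Eq precp precq) eqxx.
rewrite muln1; move: Ep Eq neqpq same_family.
case: p q => [i [X Y]] [j [X' Y']]; rewrite !inE /pair_precedes /= => Ep Eq neqpq eq_ij.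
subst j; case/and3P: Ep => AX AY neXY; case/and3P: Eq => AX' AY' neXY'.
have card_union U V : U \in A i -> V \in A i -> U != V -> #|U :|: V| = 2 * k.
  move=> AU AV neUV; rewrite cardsU (disjoint_setI0 (edges_disjoint AU AV neUV)).
  by rewrite cards0 subn0 (edge_card AU) (edge_card AV) addnn -mul2n.
have [eqYY'|neYY'] := eqVneq Y Y'.
  subst Y'; have neXX' : X != X' by apply: contraNneq neqpq => ->.
  have := card_precedes_le (X :|: X') Y; rewrite card_union // (edge_card AY).
  rewrite -bin_sub ?leq_addr // addKn -mulSnr => le_M.
  apply: leq_trans (leq_trans le_M (leq_pmull _ _)) => //.
  rewrite leq_mul2r subset_leq_card ?orbT //; apply/subsetP => s; rewrite !inE.
  by case/andP; apply: precedesUl.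
have le_M U : U \in A i ->
    #|[set s | precedes s U (Y :|: Y')]| * 'C(3 * k, k) <= #|{perm T}|.
  move=> AU; have := card_precedes_le U (Y :|: Y').
  by rewrite card_union // (edge_card AU) addnC -mulSnr.
pose before U := [set s | precedes s U (Y :|: Y')].
apply: leq_trans (_ : (#|before X| + #|before X'|) * 'C(3 * k, k) <= _).
  rewrite leq_mul2r (leq_trans _ (leq_card_setU _ _)) ?orbT //.
  apply/subset_leq_card/subsetP => s; rewrite !inE => /andP[precXY precX'Y'].
  case/orP: (precedes_cross precXY precX'Y') => [precXY'|precX'Y].
    by rewrite (precedesUr precXY precXY').
  by rewrite (precedesUr precX'Y precX'Y') orbT.
by rewrite mulnDl mul2n -addnn leq_add ?le_M.
Qed.

Lemma sum_card_preceding_pairs :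
  (\sum_s #|preceding_pairs s|) * 'C(2 * k, k) = #|edge_pairs| * #|{perm T}|.
Proof.
under eq_bigr => s _ do rewrite -sum_nat_indicator.
rewrite exchange_big big_distrl -sum_nat_const /=; apply: eq_bigr => p Ep.
by rewrite -(card_pair_precedes Ep) (sum_nat_indicator predT).
Qed.

Lemma sum_pair_precedes_both_le p : p \in edge_pairs ->
  'C(3 * k, k) * \sum_(q in edge_pairs) \sum_s
      ((p != q) && pair_precedes s p && pair_precedes s q : nat)
    <= 2 * #|{perm T}| * (k * k).
Proof.
move=> Ep; rewrite big_distrr /=.
apply: leq_trans (_ : \sum_(q in edge_pairs) 2 * #|{perm T}| * (p.1 == q.1) <= _).
  apply: leq_sum => q Eq; have [<-|neqpq] := eqVneq p q.
    by rewrite big1 ?muln0 // => s _; rewrite eqxx.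
  rewrite mulnC (leq_trans _ (card_pair_precedes_both_le Ep Eq neqpq)) // leq_mul2r.
  rewrite (sum_nat_indicator predT); apply/orP; right.
  by apply/subset_leq_card/subsetP => s; rewrite !inE.
rewrite -big_distrr leq_mul2l sum_nat_indicator; apply/orP; right.
apply: leq_trans (card_edge_pairs_at_le p.1); apply/subset_leq_card/subsetP => q.
by move=> /setIdP[Eq /eqP->]; rewrite inE Eq /=.
Qed.

Lemma sum_card_preceding_pairs_le :
  'C(3 * k, k) * \sum_s #|preceding_pairs s|
    <= 'C(3 * k, k) * #|{perm T}| + #|edge_pairs| * (2 * #|{perm T}| * (k * k)).
Proof.
pose distinct_pairs s := \sum_(p in edge_pairs) \sum_(q in edge_pairs)
  ((p != q) && pair_precedes s p && pair_precedes s q : nat).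
apply: leq_trans (_ : 'C(3 * k, k) * \sum_s (1 + distinct_pairs s) <= _).
  by rewrite leq_mul2l leq_sum ?orbT // => s _; apply: card_le_distinct_pairs.
rewrite big_split sum1_card mulnDr leq_add2l exchange_big big_distrr -sum_nat_const.
apply: leq_sum => p Ep; rewrite exchange_big /=.
exact: sum_pair_precedes_both_le.
Qed.

Lemma card_edge_pairs_le :
  'C(3 * k, k) * #|edge_pairs| <=
    'C(2 * k, k) * 'C(3 * k, k) + 2 * k ^ 4 * 'C(2 * k, k) ^ 2.
Proof.
set N := #|edge_pairs|; set M := #|{perm T}|; set C2 := 'C(2 * k, k).
set C3 := 'C(3 * k, k); set S := \sum_s #|preceding_pairs s|.
have M_gt0 : 0 < M by apply/card_gt0P; exists 1%g.
have sumS : S * C2 = N * M := sum_card_preceding_pairs.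
have leS : S <= M * (k * k).
  by rewrite /M -sum_nat_const leq_sum // => s _; apply: card_preceding_pairs_le.
have leN : N <= C2 * (k * k).
  rewrite -(leq_pmul2r M_gt0) -sumS [S * _]mulnC -mulnA leq_mul2l.
  by rewrite [_ * M]mulnC leS orbT.
have := sum_card_preceding_pairs_le; rewrite -/C3 -/S -/N -/M => le_C3S.
rewrite -(leq_pmul2r M_gt0).
apply: leq_trans (_ : C2 * (C3 * M + N * (2 * M * (k * k))) <= _).
  by rewrite -mulnA -sumS [S * _]mulnC mulnCA leq_mul2l le_C3S orbT.
rewrite mulnDr mulnDl mulnA leq_add2l.
apply: leq_trans (_ : C2 * (C2 * (k * k) * (2 * M * (k * k))) <= _).
  by rewrite leq_mul2l leq_mul2r leN !orbT.
by apply: eq_leq; ring.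
Qed.

End CrossIntersectingMatching.

Lemma ffact_ratio n m : 3 ^ m * (2 * n) ^_ m <= 2 ^ m * (3 * n) ^_ m.
Proof.
elim: m => [|m IHm]; first by rewrite !ffactn0.
have step : 3 * (2 * n - m) <= 2 * (3 * n - m) by lia.
rewrite !ffactnSr !expnS ![_ ^_ m * _]mulnC mulnACA [2 * _ * _]mulnACA.
exact: leq_mul step IHm.
Qed.

Lemma binomial_ratio k : 'C(2 * k, k) * 3 ^ k <= 'C(3 * k, k) * 2 ^ k.
Proof.
rewrite -(leq_pmul2r (fact_gt0 k)) mulnAC bin_ffact [X in _ <= X]mulnAC bin_ffact.
by rewrite mulnC [X in _ <= X]mulnC ffact_ratio.
Qed.

Import Order.TTheory GRing.Theory Num.Theory.
Local Open Scope ring_scope.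

Section GammaBound.
Variable R : realFieldType.

Lemma bernoulli_ineq (x : R) n : 0 <= x -> 1 + n%:R * x <= (1 + x) ^+ n.
Proof.
move=> x_ge0; elim: n => [|n IHn]; first by rewrite mul0r addr0 expr0.
have nx_ge0 : 0 <= n%:R * x by rewrite mulr_ge0.
rewrite exprS -natr1 (le_trans _ (ler_wpM2l _ IHn)) //; last lra.
by have := mulr_ge0 nx_ge0 x_ge0; nra.
Qed.

Definition gamma k : R := (2 * k ^ 4 * 'C(2 * k, k))%:R / ('C(3 * k, k))%:R.

Lemma gamma_le_geometric k :
  gamma k <= 2 * 10 ^+ 4 * (2 / 3 * (11 / 10) ^+ 4) ^+ k.
Proof.
have C3_gt0 : 0 < ('C(3 * k, k))%:R :> R by rewrite ltr0n bin_gt0 leq_pmull.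
have le_ratio : ('C(2 * k, k))%:R / ('C(3 * k, k))%:R <= (2 / 3 : R) ^+ k.
  rewrite ler_pdivrMr // expr_div_n mulrAC ler_pdivlMr ?exprn_gt0 //.
  by rewrite -!natrX -!natrM ler_nat [X in (_ <= X)%N]mulnC binomial_ratio.
have le_k : k%:R <= 10 * (11 / 10) ^+ k :> R.
  have := @bernoulli_ineq (1 / 10) k; rewrite (_ : 1 + 1 / 10 = 11 / 10); lra.
have le_k4 : k%:R ^+ 4 <= (10 * (11 / 10) ^+ k) ^+ 4 :> R.
  by rewrite lerXn2r ?nnegrE ?(le_trans (ler0n _ k)).
have -> : 2 * 10 ^+ 4 * (2 / 3 * (11 / 10) ^+ 4) ^+ k =
          2 * ((10 * (11 / 10) ^+ k) ^+ 4 * (2 / 3) ^+ k) :> R.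
  move: (2 / 3 : R) (11 / 10 : R) => a b.
  by rewrite !exprMn; ring.
have -> : gamma k = 2 * (k%:R ^+ 4 * (('C(2 * k, k))%:R / ('C(3 * k, k))%:R)).
  by rewrite /gamma natrM [(2 * _)%:R]natrM natrX; ring.
by rewrite ler_pM2l ?ltr0n // ler_pM ?exprn_ge0 ?divr_ge0.
Qed.

Lemma ler_nat_one_add_gamma n k :
  ('C(3 * k, k) * n <= 'C(2 * k, k) * 'C(3 * k, k) + 2 * k ^ 4 * 'C(2 * k, k) ^ 2)%N ->
  n%:R <= (1 + gamma k) * ('C(2 * k, k))%:R.
Proof.
have C3_gt0 : 0 < ('C(3 * k, k))%:R :> R by rewrite ltr0n bin_gt0 leq_pmull.
move=> le_n; rewrite -(ler_pM2l C3_gt0) -natrM.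
apply: le_trans (_ : _ <= ('C(2 * k, k) * 'C(3 * k, k) + 2 * k ^ 4 * 'C(2 * k, k) ^ 2)%:R) _.
  by rewrite ler_nat.
rewrite /gamma natrD !natrM le_eqVlt; apply/orP; left; apply/eqP; field.
by rewrite lt0r_neq0.
Qed.

End GammaBound.

Theorem lemma2p1 (R : realType) :
  exists gamma : nat -> R,
    (forall k, (2 <= k)%N -> 0 <= gamma k) /\
    (exists C q : R, 0 < C /\ 0 < q /\ q < 1 /\
       forall k, (2 <= k)%N -> gamma k <= C * q ^+ k) /\
    (forall (k t : nat) (T : finType) (A : 'I_t -> {set {set T}}),
       (2 <= k)%N ->
       cross_intersecting_matching k A ->
       (\sum_(i < t) (#|A i| * (#|A i| - 1))%:R : R)
         <= (1 + gamma k) * ('C(2 * k, k))%:R).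
Proof.
exists (@gamma R); split; first by move=> k _; rewrite divr_ge0.
split.
  exists (2 * 10 ^+ 4), (2 / 3 * (11 / 10) ^+ 4).
  do 3 (split; first by rewrite !exprS expr0; lra).
  by move=> k _; apply: gamma_le_geometric.
move=> k t T A _ matchingA.
rewrite -natr_sum -card_edge_pairs.
exact/ler_nat_one_add_gamma/card_edge_pairs_le.
Qed.
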